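(* Let $\mathcal{I}$ be an interval hypergraph on $[n]$ closed under intersection. Then the map $(i,j)\mapsto A_{ij}$ is a bijection from $\mathcal{IJ}_{\mathcal{I}}$ to the set of join irreducible elements of the lattice $P_{\mathcal{I}}$.
   Context: An interval hypergraph $\mathcal{I}$ on $[n]$ is a collection of intervals of $[n]$ containing all singletons; it is closed under intersection if $I,J\in\mathcal{I}$, $I\cap J\ne\varnothing$ imply $I\cap J\in\mathcal{I}$. An orientation is a map $O:\mathcal{I}\to[n]$ with $O(I)\in I$; it is acyclic if there are no $H_1,\dots,H_k$, $k\ge2$, with $O(H_{i+1})\in H_i\setminus\{O(H_i)\}$ for $i\in[k-1]$ and $O(H_1)\in H_k\setminus\{O(H_k)\}$. Orientations $O\ne O'$ are related by an increasing flip (from $O$ to $O'$) if there exist $1\le i<j\le n$ such that for all $H$: if $O(H)\ne O'(H)$ then $O(H)=i$, $O'(H)=j$; and if $\{i,j\}\subseteq H$ then $O(H)=i\iff O'(H)=j$. $P_{\mathcal{I}}$ is the transitive closure of the increasing flip relation on acyclic orientations (a lattice here). For $1\le i<j\le n$ such that some $I\in\mathcal{I}$ contains $\{i,j\}$, let $J_{ij}=\bigcap\{I\in\mathcal{I}:\{i,j\}\subseteq I\}$ and $\mu_{ij}=\min J_{ij}$. Let $\mathcal{IJ}_{\mathcal{I}}$ be the set of such pairs $(i,j)$ satisfying \[ i=\max\Big([\mu_{ij},j[\ \setminus\bigcup_{J\in\mathcal{I},\ J\subseteq[\mu_{ij},j[}\big(J\setminus\{\min J\}\big)\Big). \] For $(i,j)\in\mathcal{IJ}_{\mathcal{I}}$,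 $A_{ij}$ is the orientation with $A_{ij}(J)=j$ if $j\in J$ and $\min J\ge\mu_{ij}$, and $A_{ij}(J)=\min J$ otherwise (equivalently $A_{ij}=\mathrm{Or}_\pi$ for $\pi=1\cdots(\mu_{ij}-1)\,j\,\mu_{ij}\cdots(j-1)\,(j+1)\cdots n$, where $\mathrm{Or}_\pi(I)=\pi(\min\{k:\pi(k)\in I\})$). An element of a lattice is join irreducible if it is not the minimum and covers exactly one element. *)

(* Ground set [n] is rendered as 'I_n = {0,...,n-1}
   (an order-preserving relabelling of {1,...,n}). *)
From Stdlib Require Import Relations.
From mathcomp Require Import all_boot all_order.
Set Implicit Arguments. Unset Strict Implicit. Unset Printing Implicit Defensive.

Section Defs.
Variable n : nat.

Definition is_interval (A : {set 'I_n}) : bool :=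
  (A != set0) &&
  [forall x, forall y : 'I_n, forall z,
     (x \in A) && (z \in A) && (x <= y <= z)%N ==> (y \in A)].

Definition interval_hypergraph (I : {set {set 'I_n}}) : Prop :=
  (forall H, H \in I -> is_interval H) /\ (forall x : 'I_n, [set x] \in I).

Definition closed_under_intersection (I : {set {set 'I_n}}) : Prop :=
  forall H J, H \in I -> J \in I -> H :&: J != set0 -> H :&: J \in I.

Variable I : {set {set 'I_n}}.

Notation edge := {H : {set 'I_n} | H \in I}.

Definition omapI := {ffun edge -> 'I_n}.

Definition is_orientation (O : omapI) : Prop := forall H : edge, O H \in val H.

Definition arc (O : omapI) (H H' : edge) : bool :=
  (O H' \in val H) && (O H' != O H).

(* acyclic: no H_1,...,H_k (k >= 2) with O(H_{i+1}) \in H_i \ {O(H_i)}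
   and O(H_1) \in H_k \ {O(H_k)}; mathcomp's [cycle] checks exactly
   arc H_1 H_2, ..., arc H_{k-1} H_k, arc H_k H_1. *)
Definition acyclic (O : omapI) : Prop :=
  ~ exists s : seq edge, (2 <= size s)%N /\ cycle (arc O) s.

Definition acyclic_orientation (O : omapI) : Prop :=
  is_orientation O /\ acyclic O.

Definition increasing_flip (O O' : omapI) : Prop :=
  O <> O' /\
  exists i j : 'I_n, (i < j)%N /\
    forall H : edge,
      (O H != O' H -> O H = i /\ O' H = j) /\
      ((i \in val H) && (j \in val H) -> (O H = i <-> O' H = j)).

Definition acyclic_flip (O O' : omapI) : Prop :=
  acyclic_orientation O /\ acyclic_orientation O' /\ increasing_flip O O'.

Definition Ple (O O' : omapI) : Prop := clos_refl_trans omapI acyclic_flip O O'.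

Definition Plt (O O' : omapI) : Prop := Ple O O' /\ O <> O'.

Definition covers (O O' : omapI) : Prop :=
  acyclic_orientation O /\ acyclic_orientation O' /\ Plt O' O /\
  ~ exists O'', acyclic_orientation O'' /\ Plt O' O'' /\ Plt O'' O.

Definition is_minimum (O : omapI) : Prop :=
  acyclic_orientation O /\ forall O', acyclic_orientation O' -> Ple O O'.

Definition join_irreducible (O : omapI) : Prop :=
  acyclic_orientation O /\ ~ is_minimum O /\
  exists! O', covers O O'.

Definition minS (A : {set 'I_n}) : nat := \big[minn/n]_(x in A) (x : nat).

Definition Jij (i j : 'I_n) : {set 'I_n} :=
  \bigcap_(H in I | (i \in H) && (j \in H)) H.

Definition mu (i j : 'I_n) : nat := minS (Jij i j).

Definition IJset (i j : 'I_n) : {set 'I_n} :=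
  let R := [set x : 'I_n | (mu i j <= x < j)%N] in
  R :\: \bigcup_(J in I | J \subset R) (J :\: [set x : 'I_n | (x : nat) == minS J]).

Definition IJ : {set 'I_n * 'I_n} :=
  [set p : 'I_n * 'I_n | [&& (p.1 < p.2)%N,
              [exists H in I, (p.1 \in H) && (p.2 \in H)] &
              (p.1 : nat) == \max_(x in IJset p.1 p.2) (x : nat)]].

Definition A (i j : 'I_n) : omapI :=
  [ffun H : edge =>
     if (j \in val H) && (mu i j <= minS (val H))%N then j
     else insubd j (minS (val H))].

End Defs.

Arguments omapI [n] I.

From Pilot Require Import Defs.
From Stdlib Require Import Relations Classical.
From mathcomp Require Import all_boot all_order zify.
Set Implicit Arguments. Unset Strict Implicit. Unset Printing Implicit Defensive.
Import Order.TTheory.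

(* For an intersection-closed interval hypergraph, an orientation is acyclic
   iff it is local: O K = O H whenever K is contained in H and O H lies in K.
   Flips only raise values, so the sum of the values strictly increases along
   P_I, and a flip into O lowers one value b of O to some a < b on the hyperedges holding
   both ([lower O a b]).  Such a flip exists at every value O H > min H, so a
   join irreducible O has a single raised value j, and locality then forces
   O = A(mu, j), mu being the least minimum of a hyperedge sent to j.  The flips
   into A(mu, j) lower j to the points a of the set S(mu, j) occurring in the
   definition of IJ; the one with a = max S is always a cover, and it is the
   only cover exactly when mu = mu_ij. *)

Section Intervals.
Variable n : nat.
Implicit Types (B : {set 'I_n}) (x y z : 'I_n).

Lemma interval_mem B x y z :
  is_interval B -> x \in B -> z \in B -> (x <= y <= z)%N -> y \in B.
Proof.
move=> /andP[_ /forallP/(_ x)/forallP/(_ y)/forallP/(_ z)/implyP hB] xB zB xyz.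
by apply: hB; rewrite xB zB.
Qed.

Lemma minS_le B x : x \in B -> (minS B <= x)%N.
Proof. exact: (bigmin_le_cond n (fun y : 'I_n => y : nat)). Qed.

Lemma minS_mem B : B != set0 -> exists2 x, x \in B & (x : nat) = minS B.
Proof.
case/set0Pn=> y yB.
have [x xB e] := @eq_bigmin _ _ _ n y (fun x => x \in B) (fun x : 'I_n => x : nat) yB
  (fun x _ => ltnW (ltn_ord x)).
by exists x => //; rewrite -e.
Qed.

Lemma max_ordP B i : B != set0 ->
  reflect (i \in B /\ forall x, x \in B -> (x <= i)%N) ((i : nat) == \max_(x in B) x).
Proof.
move=> B0; apply: (iffP eqP) => [iE|[iB imax]].
  split=> [|x xB]; last by rewrite iE leq_bigmax_cond.
  have ne : (0 < #|B|)%N by rewrite card_gt0.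
  have [x xB xE] := eq_bigmax_cond (fun x : 'I_n => x : nat) ne.
  by rewrite (_ : i = x) //; apply: ord_inj; rewrite iE xE.
by apply/eqP; rewrite eqn_leq (leq_bigmax_cond i iB) /=; apply/bigmax_leqP.
Qed.

End Intervals.

Lemma cycle_free_source (T : finType) (r : rel T) (P : pred T) x :
  (forall s, s != [::] -> ~~ cycle r s) -> P x ->
  exists2 y, P y & forall z, P z -> ~~ r z y.
Proof.
move=> nocycle Px.
pose e := [rel u v | [&& P u, P v & r u v]].
pose anc y := [set z | [exists w, e z w && connect e w y]].
have anc_irr y : y \notin anc y.
  rewrite inE; apply/existsP=> -[w /andP[eyw /connectP[p wp ylast]]].
  have /negP := nocycle (w :: p) isT; apply.
  rewrite /= rcons_path -ylast; case/and3P: eyw => _ _ ->; rewrite andbT.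
  by apply: sub_path wp => u v /and3P[].
have [y Py ymin] := arg_minnP (fun y => #|anc y|) Px.
exists y => // z Pz; apply/negP=> rzy.
have ezy : e z y by rewrite /= Pz Py.
suff /proper_card : anc z \proper anc y by rewrite ltnNge ymin.
apply/properP; split.
  apply/subsetP=> u; rewrite !inE => /existsP[w /andP[euw wz]].
  by apply/existsP; exists w; rewrite euw (connect_trans wz) ?connect1.
by exists z; rewrite ?anc_irr // inE; apply/existsP; exists y; rewrite ezy connect0.
Qed.

Lemma shortcut_cycle_free (T : finType) (r : rel T) (f : T -> nat) :
  irreflexive r ->
  (forall x y z, r y x -> r x z -> (f y <= f x)%N -> (f z <= f x)%N -> r y z) ->
  forall s, s != [::] -> ~~ cycle r s.
Proof.
move=> irr short s; have [k] := ubnP (size s); elim: k s => // k IH [//|x0 s] sk _.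
have [x xs xmax] := @arg_maxnP _ x0 (mem (x0 :: s)) f (mem_head x0 s).
have [i [|z t] rot_s] := rot_to xs; rewrite -(rot_cycle i) rot_s /= ?irr //.
have mem_s y : y \in x :: z :: t -> y \in x0 :: s by rewrite -rot_s mem_rot.
have ltk : (size (z :: t) < k)%N by move: sk; rewrite -(size_rot i) rot_s.
rewrite rcons_path; apply: contraNN (IH _ ltk isT) => /and3P[rxz zt rtx].
rewrite /= rcons_path zt; apply: short rtx rxz _ _; apply/xmax/mem_s.
  by rewrite in_cons mem_last orbT.
by rewrite in_cons mem_head orbT.
Qed.

Section Orientations.
Variables (n : nat) (I : {set {set 'I_n}}).
Notation edge := {H : {set 'I_n} | H \in I}.
Notation omap := (omapI I).
Implicit Types (O Q R C : omap) (H K L : edge) (a b : 'I_n).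

Lemma omap_neq O O' : O <> O' -> exists H, O H != O' H.
Proof.
move=> neq; apply/existsP; apply: contra_notT neq => /existsPn same.
by apply/ffunP=> H; apply/eqP/negbNE/same.
Qed.

Lemma arc_irr O : irreflexive (Defs.arc O).
Proof. by move=> H; rewrite /Defs.arc eqxx andbF. Qed.

Lemma acyclic_cycle_free O : acyclic O -> forall s, s != [::] -> ~~ cycle (Defs.arc O) s.
Proof.
move=> acO [//|H [|H' s]] _; first by rewrite /= arc_irr.
by apply/negP=> cyc; apply: acO; exists [:: H, H' & s].
Qed.

Definition local O := forall H K, val K \subset val H -> O H \in val K -> O K = O H.

Lemma acyclic_local O : is_orientation O -> acyclic O -> local O.
Proof.
move=> orO acO H K KH OHK; apply/eqP; apply: contraPT acO => neq; case.
exists [:: H; K]; split=> //.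
by rewrite /= /Defs.arc OHK (subsetP KH _ (orO K)) neq eq_sym neq.
Qed.

Lemma increasing_flip_le O O' : increasing_flip O O' -> forall H, (O H <= O' H)%N.
Proof.
case=> _ [i [j [ij flip]]] H; have [+ _] := flip H.
by case: eqP => [-> _|_ /(_ isT) [-> ->]]; last exact: ltnW.
Qed.

Lemma Ple_le O O' : Ple O O' -> forall H, (O H <= O' H)%N.
Proof.
elim=> [O1 O2 [_ [_ /increasing_flip_le //]]|//|O1 O2 O3 _ le12 _ le23] H.
exact: leq_trans (le12 H) (le23 H).
Qed.

Definition weight O := (\sum_H (O H : nat))%N.

Lemma Plt_weight O O' : Plt O O' -> (weight O < weight O')%N.
Proof.
case=> /Ple_le le neq; have [H OH] := omap_neq neq.
rewrite /weight (bigD1 H) //= [X in (_ < X)%N](bigD1 H) //= -addSn.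
rewrite leq_add ?leq_sum // ltn_neqAle le andbT.
by apply: contra OH => /eqP/val_inj ->.
Qed.

Lemma Plt_flip O O' :
  acyclic_orientation O -> acyclic_orientation O' -> increasing_flip O O' -> Plt O O'.
Proof. by move=> acO acO' flip; split; [apply: rt_step | case: flip]. Qed.

Lemma Plt_last_flip C O : Plt C O -> exists2 Y, Ple C Y & acyclic_flip Y O.
Proof.
case=> le; case: (clos_rt_rtn1 _ _ _ _ le) => [//|Y O' flip le' _].
by exists Y => //; apply: clos_rtn1_rt.
Qed.

Lemma covers_flip O C : covers O C -> acyclic_flip C O.
Proof.
case=> _ [_ [/Plt_last_flip[Y CY flipYO] between]].
have [-> //|neq] := classic (C = Y).
case: between; exists Y; have [acY [_ [YO _]]] := flipYO.
by do !split=> //; apply: rt_step.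
Qed.

Lemma Plt_covers Q O : acyclic_orientation Q -> Plt Q O ->
  exists C, covers O C /\ Ple Q C.
Proof.
move=> acQ QO; have [Y _ [_ [acO _]]] := Plt_last_flip QO.
suff /(_ Q acQ (rt_refl _ _ _) QO) : forall R, acyclic_orientation R -> Ple Q R -> Plt R O ->
  exists C, covers O C /\ Ple Q C by [].
move=> R; have [k] := ubnP (weight O - weight R).
elim: k R => // k IH R wR acR QR RO.
have [[R' [acR' [RR' R'O]]]|none] :=
  classic (exists R', acyclic_orientation R' /\ Plt R R' /\ Plt R' O).
  apply: (IH R') => //; last exact: rt_trans QR RR'.1.
  by have := Plt_weight RR'; have := Plt_weight R'O; lia.
by exists R.
Qed.

Definition lower O (a b : 'I_n) : omap :=
  [ffun H : edge => if [&& a \in val H, b \in val H & O H == b] then a else O H].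

Lemma lowerE O a b H :
  lower O a b H = if [&& a \in val H, b \in val H & O H == b] then a else O H.
Proof. by rewrite ffunE. Qed.

Lemma lower_in O a b H : a \in val H -> b \in val H -> O H = b -> lower O a b H = a.
Proof. by move=> aH bH OH; rewrite lowerE aH bH OH eqxx. Qed.

Lemma lower_out O a b H :
  ~~ [&& a \in val H, b \in val H & O H == b] -> lower O a b H = O H.
Proof. by rewrite lowerE => /negbTE ->. Qed.

Lemma lower_neq O a b H : lower O a b H != O H -> O H = b.
Proof. by rewrite lowerE; case: and3P => [[_ _ /eqP]|]; rewrite ?eqxx. Qed.

Lemma lower_orientation O a b : is_orientation O -> is_orientation (lower O a b).
Proof. by move=> orO H; rewrite lowerE; case: and3P => [[]|]. Qed.

Lemma increasing_flip_lower O a b H0 : (a < b)%N ->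
  (forall H, a \in val H -> b \in val H -> O H != a) ->
  a \in val H0 -> b \in val H0 -> O H0 = b ->
  increasing_flip (lower O a b) O.
Proof.
move=> ab notA aH0 bH0 OH0; split.
  move/ffunP/(_ H0); rewrite lower_in // OH0 => ba.
  by move: ab; rewrite ba ltnn.
exists a, b; split=> // H; rewrite lowerE; split.
  by case: and3P => [[_ _ /eqP]|]; rewrite ?eqxx.
move=> /andP[aH bH]; rewrite aH bH /=; case: eqP => [//|neq]; split=> // OHa.
by move: (notA H aH bH); rewrite OHa eqxx.
Qed.

Lemma increasing_flipE Q O : is_orientation Q -> is_orientation O -> increasing_flip Q O ->
  exists a b : 'I_n, [/\ (a < b)%N, Q = lower O a b,
     forall H, a \in val H -> b \in val H -> O H != a &
     exists H0, [/\ a \in val H0, b \in val H0 & O H0 = b]].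
Proof.
move=> orQ orO [neq [a [b [ab flip]]]].
have ba : b != a by rewrite neq_ltn ab orbT.
have changed_ab H : Q H != O H -> [/\ a \in val H, b \in val H, Q H = a & O H = b].
  move=> QO; have [/(_ QO)[QHa OHb] _] := flip H.
  by split=> //; [rewrite -QHa | rewrite -OHb].
have notA H : a \in val H -> b \in val H -> O H != a.
  move=> aH bH; apply/eqP=> OHa; have [_ /(_ (introT andP (conj aH bH)))[QHa _]] := flip H.
  case: (Q H =P O H) => [QO|/eqP/changed_ab[_ _ _ OHb]].
    by move: ba; rewrite -(QHa (etrans QO OHa)) OHa eqxx.
  by move: ba; rewrite -OHb OHa eqxx.
have QE : Q = lower O a b.
  apply/ffunP=> H; rewrite lowerE.
  case: (Q H =P O H) => [QO|/eqP/changed_ab[aH bH QHa OHb]].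
    case: and3P => [[aH bH /eqP OHb]|//].
    by have [_ /(_ (introT andP (conj aH bH)))[_ ->]] := flip H.
  by rewrite aH bH OHb eqxx.
exists a, b; split=> //.
have [H /changed_ab[aH bH _ OHb]] := omap_neq neq.
by exists H.
Qed.

End Orientations.

Section IntervalHypergraph.
Variables (n : nat) (I : {set {set 'I_n}}).
Hypotheses (hI : interval_hypergraph I) (hC : closed_under_intersection I).
Notation edge := {H : {set 'I_n} | H \in I}.
Notation omap := (omapI I).
Implicit Types (O Q R C : omap) (H K L : edge) (a b i j x y z : 'I_n).

Lemma edge_mem H x y z : x \in val H -> z \in val H -> (x <= y <= z)%N -> y \in val H.
Proof. by apply: interval_mem; case: hI => + _; apply; apply: valP. Qed.

Definition emin H := minS (val H).

Lemma emin_le H x : x \in val H -> (emin H <= x)%N.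
Proof. exact: minS_le. Qed.

Lemma emin_mem H : exists2 x, x \in val H & (x : nat) = emin H.
Proof. by apply: minS_mem; case: hI => /(_ _ (valP H))/andP[]. Qed.

Lemma emin_ltn H : (emin H < n)%N.
Proof. by have [x _ <-] := emin_mem H. Qed.

Lemma val_insubd_emin H x : (insubd x (emin H) : nat) = emin H.
Proof. by rewrite val_insubd emin_ltn. Qed.

Lemma emin_sub H K : val K \subset val H -> (emin H <= emin K)%N.
Proof. by have [x xK <-] := emin_mem K => /subsetP/(_ x xK); apply: emin_le. Qed.

Definition singleton_edge x : edge := exist _ [set x] (proj2 hI x).

Lemma inter_edge H K x : x \in val H -> x \in val K -> {M : edge | val M = val H :&: val K}.
Proof.
move=> xH xK; have HK : val H :&: val K != set0 by apply/set0Pn; exists x; rewrite inE xH.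
by exists (exist _ (val H :&: val K) (hC (valP H) (valP K) HK)).
Qed.

Lemma local_eq O H K : is_orientation O -> local O ->
  O H \in val K -> O K \in val H -> O H = O K.
Proof.
move=> orO locO OHK OKH; have [M ME] := inter_edge (orO H) OHK.
have <- : O M = O H by apply: locO; rewrite ?ME ?subsetIl // inE orO.
by apply: locO; rewrite ?ME ?subsetIr // inE OKH orO.
Qed.

Lemma local_arc_shortcut O : is_orientation O -> local O -> forall H1 H2 H3,
  Defs.arc O H2 H1 -> Defs.arc O H1 H3 -> (O H2 <= O H1)%N -> (O H3 <= O H1)%N ->
  Defs.arc O H2 H3.
Proof.
move=> orO locO H1 H2 H3 /andP[O1H2 neq21] /andP[O3H1 neq13] le21 le31.
have lt21 : (O H2 < O H1)%N.
  by rewrite ltn_neqAle le21 andbT; apply: contra neq21 => /eqP/val_inj->.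
have lt31 : (O H3 < O H1)%N.
  by rewrite ltn_neqAle le31 andbT; apply: contra neq13 => /eqP/val_inj->.
have lt23 : (O H2 < O H3)%N.
  rewrite ltnNge; apply/negP=> le32; apply: (negP neq21); apply/eqP; apply: local_eq => //.
  by apply: (edge_mem O3H1 (orO H1)); rewrite le32 (ltnW lt21).
apply/andP; split; first by apply: (edge_mem (orO H2) O1H2); rewrite (ltnW lt23) le31.
by apply: contraTneq lt23 => ->; rewrite ltnn.
Qed.

Lemma local_acyclic O : is_orientation O -> local O -> acyclic O.
Proof.
move=> orO locO [s [s2 cyc]].
have s0 : s != [::] by case: s s2 {cyc}.
move: cyc; apply/negP.
exact: (shortcut_cycle_free (f := fun H => O H) (arc_irr O) (local_arc_shortcut orO locO) s0).
Qed.

Lemma lower_local O a b : is_orientation O -> local O ->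
  (forall H L, O H = b -> a \in val H -> val L \subset val H -> a \in val L ->
     b \notin val L -> O L = a) ->
  local (lower O a b).
Proof.
move=> orO locO lowered H K KH; rewrite !lowerE.
case: and3P => [[aH bH /eqP OHb]|notH]; case: and3P => [[aK bK /eqP OKb]|notK] //.
- move=> aK; have [bK|bK] := boolP (b \in val K); last exact: lowered OHb aH KH aK bK.
  have OKH : O K = O H by apply: locO; rewrite // OHb.
  by exfalso; apply: notK; rewrite OKH OHb.
- move=> OHK; exfalso; apply: notH; rewrite (subsetP KH _ aK) (subsetP KH _ bK).
  by rewrite -(locO H K) ?OKb.
- exact: locO.
Qed.

Lemma exists_lower_flip O H0 : acyclic_orientation O -> (emin H0 < O H0)%N ->
  exists a, acyclic_orientation (lower O a (O H0)) /\ increasing_flip (lower O a (O H0)) O.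
Proof.
move=> [orO acO] lt; have locO := acyclic_local orO acO; set v := O H0 in lt *.
(* The new value is that of a source, for [arc O], among the hyperedges lying
   inside a hyperedge sent to [v] and strictly to the left of [v]. *)
pose P L := [&& [exists H, (O H == v) && (val L \subset val H)], v \notin val L &
  [forall x in val L, (x < v)%N]].
have P_intro H L : O H = v -> val L \subset val H -> v \notin val L ->
    forall a, a \in val L -> (a < v)%N -> P L.
  move=> OH LH vL a aL av; apply/and3P; split=> //.
    by apply/existsP; exists H; rewrite OH eqxx.
  apply/forall_inP=> x xL; rewrite ltnNge; apply: contra vL => vx.
  by apply: (edge_mem aL xL); rewrite vx (ltnW av).
have [xm xmH0 xmE] := emin_mem H0.
have /cycle_free_source : P (singleton_edge xm).
  apply: (P_intro H0 _ erefl); rewrite ?sub1set ?inE ?eqxx ?xmE //.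
  by apply: contraTneq lt => ->; rewrite -xmE ltnn.
case/(_ _ (acyclic_cycle_free acO)) => L0 /and3P[/existsP[H1 /andP[/eqP OH1 L0H1]] vL0 ltL0].
move=> srcL0; set a := O L0.
have av : (a < v)%N by apply: (forall_inP ltL0); apply: orO.
have aH1 : a \in val H1 by apply: (subsetP L0H1); apply: orO.
have lowered H L : O H = v -> a \in val H -> val L \subset val H -> a \in val L ->
    v \notin val L -> O L = a.
  move=> OH aH LH aL vL; have /srcL0 := P_intro H L OH LH vL a aL av.
  by rewrite /Defs.arc aL negbK => /eqP.
have orL := lower_orientation a v orO.
exists a; split; first by split=> //; apply/local_acyclic/lower_local.
apply: (increasing_flip_lower (H0 := H1)) => //; last by rewrite -OH1 orO.
move=> H aH vH; apply: contraTneq av => OHa.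
by rewrite -OHa (local_eq (K := H1)) ?OH1 ?ltnn // OHa.
Qed.

Definition Amu (m : nat) j : omap :=
  [ffun H : edge => if (j \in val H) && (m <= emin H)%N then j else insubd j (emin H)].

Lemma AE i j : A I i j = Amu (mu I i j) j.
Proof. by []. Qed.

Lemma Amu_val m j H :
  (Amu m j H : nat) = if (j \in val H) && (m <= emin H)%N then (j : nat) else emin H.
Proof. by rewrite ffunE; case: ifP => // _; rewrite val_insubd_emin. Qed.

Lemma Amu_j m j H : j \in val H -> (m <= emin H)%N -> Amu m j H = j.
Proof. by move=> jH mH; rewrite ffunE jH mH. Qed.

Lemma Amu_emin m j H : ~~ ((j \in val H) && (m <= emin H)%N) -> (Amu m j H : nat) = emin H.
Proof. by rewrite Amu_val => /negbTE ->. Qed.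

Lemma Amu_orientation m j : is_orientation (Amu m j).
Proof.
move=> H; rewrite ffunE; case: ifP => [/andP[] //|_].
have [x xH xE] := emin_mem H.
by rewrite (_ : insubd j _ = x) //; apply: ord_inj; rewrite val_insubd_emin.
Qed.

Lemma Amu_local m j : local (Amu m j).
Proof.
move=> H K KH; have le := emin_sub KH.
rewrite ffunE; case: ifP => [/andP[jH mH] jK|notH].
  by rewrite Amu_j // (leq_trans mH le).
move=> /emin_le; rewrite val_insubd_emin => ge.
have eK : emin K = emin H by apply/eqP; rewrite eqn_leq le ge.
apply: ord_inj; rewrite Amu_val val_insubd_emin eK.
by case: ifP => // /andP[jK mH]; rewrite (subsetP KH _ jK) mH in notH.
Qed.

Lemma Amu_acyclic m j : acyclic_orientation (Amu m j).
Proof. by split; [|apply: local_acyclic]; [apply: Amu_orientation..|apply: Amu_local]. Qed.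

Definition segment (m : nat) j := [set x : 'I_n | (m <= x < j)%N].

Definition Smu (m : nat) j : {set 'I_n} :=
  segment m j :\: \bigcup_(J in I | J \subset segment m j)
    (J :\: [set x : 'I_n | (x : nat) == minS J]).

Lemma segmentP (m : nat) j x : reflect (m <= x < j)%N (x \in segment m j).
Proof. by rewrite inE; apply: idP. Qed.

Lemma SmuP (m : nat) j x : reflect
  ((m <= x < j)%N /\ forall L, val L \subset segment m j -> x \in val L -> (x : nat) = emin L)
  (x \in Smu m j).
Proof.
rewrite in_setD; apply: (iffP andP) => [[/bigcupP notmin /segmentP seg]|[seg xmin]].
  split=> // L Lseg xL; apply/eqP; apply: contra_notT notmin => neq.
  by exists (val L); rewrite ?(valP L) ?Lseg // !inE xL andbT.
split; last exact/segmentP.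
apply/bigcupP=> -[J /andP[JI Jseg]]; rewrite !inE => /andP[/eqP neq xJ].
by apply: neq; apply: (xmin (exist _ J JI)).
Qed.

Lemma mem_IJ i j : (i, j) \in IJ I =
  [&& (i < j)%N, [exists H in I, (i \in H) && (j \in H)] &
      (i : nat) == \max_(x in Smu (mu I i j) j) x].
Proof. by rewrite inE. Qed.

Lemma Jij_edge i j H0 : i \in val H0 -> j \in val H0 ->
  exists E : edge, [/\ val E = Jij I i j, i \in val E, j \in val E &
     forall H, i \in val H -> j \in val H -> val E \subset val H].
Proof.
move=> iH0 jH0.
have Jsub (H : {set 'I_n}) : H \in I -> i \in H -> j \in H -> Jij I i j \subset H.
  by move=> HI iH jH; apply: bigcap_inf; rewrite HI iH.
have /andP[iJ jJ] : (i \in Jij I i j) && (j \in Jij I i j).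
  by apply/andP; split; apply/bigcapP=> H /andP[_ /andP[]].
have JI : Jij I i j \in I.
  have : (val H0 :&: Jij I i j \in I) && (i \in Jij I i j).
    apply: (big_rec (fun X => (val H0 :&: X \in I) && (i \in X))).
      by rewrite setIT (valP H0) inE.
    move=> H X /andP[HI /andP[iH _]] /andP[H0X iX].
    rewrite setICA in_setI iH iX !andbT; apply: hC => //.
    by apply/set0Pn; exists i; rewrite !inE iH iH0 iX.
  by rewrite (setIidPr (Jsub _ (valP H0) iH0 jH0)) => /andP[].
by exists (exist _ (Jij I i j) JI); split=> // H iH jH; apply: Jsub; rewrite ?(valP H).
Qed.

Section Amu.
Variables (m : nat) (j : 'I_n).

Local Notation B := (Amu m j).
Local Notation S := (Smu m j).
Local Notation Q a := (lower (Amu m j) a j).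

Lemma segment_emin L : val L \subset segment m j -> (m <= emin L)%N.
Proof. by have [x xL <-] := emin_mem L => /subsetP/(_ x xL)/segmentP/andP[]. Qed.

Lemma sub_segment H L a : (m <= emin H)%N -> val L \subset val H -> a \in val L ->
  (a < j)%N -> j \notin val L -> val L \subset segment m j.
Proof.
move=> mH LH aL aj jL; apply/subsetP=> y yL; apply/segmentP.
rewrite (leq_trans mH (emin_le (subsetP LH _ yL))) ltnNge /=.
by apply: contra jL => jy; apply: (edge_mem aL yL); rewrite jy (ltnW aj).
Qed.

Lemma Amu_eq_below x H : (m <= x < j)%N -> B H = x -> j \notin val H /\ (x : nat) = emin H.
Proof.
move=> /andP[mx xj] BH; move: (Amu_val m j H); rewrite BH.
case: ifP => [_ xjE|/negbT notH xE]; first by rewrite xjE ltnn in xj.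
by split=> //; apply: contra notH => jH; rewrite jH -xE mx.
Qed.

Lemma Amu_eq_Smu x y H : x \in S -> y \in S -> B H = x -> y \in val H -> y = x.
Proof.
move=> /SmuP[mxj _] /SmuP[_ ymin] BH yH; have [jH xE] := Amu_eq_below mxj BH.
have /andP[mx xj] := mxj.
have Hseg : val H \subset segment m j.
  apply: (sub_segment (H := H) (a := x)) xj jH; [by rewrite -xE | exact: subxx |].
  by rewrite -BH; apply: Amu_orientation.
by apply: ord_inj; rewrite xE (ymin H).
Qed.

Section AboveK0.
Variable K0 : edge.
Hypotheses (jK0 : j \in val K0) (eminK0 : emin K0 = m) (mj : (m < j)%N).

Lemma K0_mem y : (m <= y <= j)%N -> y \in val K0.
Proof.
move=> myj; have [x xK0 xE] := emin_mem K0.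
by apply: edge_mem xK0 jK0 _; rewrite xE eminK0.
Qed.

Lemma segment_sub_K0 L : val L \subset segment m j -> val L \subset val K0.
Proof.
move=> /subsetP Lseg; apply/subsetP=> y /Lseg/segmentP/andP[my yj].
by apply: K0_mem; rewrite my (ltnW yj).
Qed.

Lemma Amu_K0 : B K0 = j.
Proof. by rewrite Amu_j // eminK0. Qed.

Lemma Smu_K0_emin : exists2 x, x \in S & (x : nat) = m.
Proof.
have [x xK0 xE] := emin_mem K0; rewrite eminK0 in xE; exists x => //.
apply/SmuP; split=> [|L Lseg xL]; first by rewrite xE leqnn.
by apply/eqP; rewrite eqn_leq emin_le // xE segment_emin.
Qed.

Lemma lower_Amu_flip a : a \in S -> acyclic_orientation (Q a) /\ increasing_flip (Q a) B.
Proof.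
move=> aS; have /SmuP[maj amin] := aS; have /andP[ma aj] := maj.
have orB := Amu_orientation m j.
have orQ := lower_orientation a j orB.
have locQ : local (Q a).
  apply: lower_local => //; first exact: Amu_local.
  move=> H L BH aH LH aL jL.
  have mH : (m <= emin H)%N.
    move: (Amu_val m j H); rewrite BH; case: ifP => [/andP[] //|_ jE].
    by have := emin_le aH; rewrite -jE leqNgt aj.
  apply: ord_inj; rewrite Amu_emin ?(negbTE jL) //; symmetry.
  by apply: (amin _ _ aL); apply: sub_segment mH LH aL aj jL.
split; first by split=> //; apply: local_acyclic.
have aK0 : a \in val K0 by apply: K0_mem; rewrite ma (ltnW aj).
apply: (increasing_flip_lower (H0 := K0) aj _ aK0 jK0 Amu_K0).
by move=> H _ jH; apply/eqP=> /(Amu_eq_below maj)[]; rewrite jH.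
Qed.

Lemma Amu_flipE C : acyclic_orientation C -> increasing_flip C B ->
  exists2 a, a \in S & C = Q a.
Proof.
move=> [orC acC] flip.
have [a [b [ab CE _ [H0 [aH0 bH0 BH0]]]]] := increasing_flipE orC (Amu_orientation m j) flip.
have /andP[jH0 mH0] : (j \in val H0) && (m <= emin H0)%N.
  apply: contraTT ab => /Amu_emin BH0E; rewrite -leqNgt -BH0 BH0E; exact: emin_le.
have bj : b = j by rewrite -BH0 Amu_j.
rewrite {}bj in ab CE; exists a => //.
have ma : (m <= a)%N := leq_trans mH0 (emin_le aH0).
apply/SmuP; split=> [|L Lseg aL]; first by rewrite ab ma.
have CK0 : C K0 = a by rewrite CE lower_in ?Amu_K0 //; apply: K0_mem; rewrite ma (ltnW ab).
have jL : j \notin val L by apply/negP=> /(subsetP Lseg)/segmentP; rewrite ltnn andbF.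
have <- : C L = a by rewrite -CK0; apply: (acyclic_local orC acC); rewrite ?segment_sub_K0 ?CK0.
by rewrite CE lower_out ?(negbTE jL) ?andbF // Amu_emin // (negbTE jL).
Qed.

Lemma Amu_between a R : a \in S -> acyclic_orientation R -> Ple (Q a) R -> Ple R B ->
  R = B \/ exists2 x, x \in S & (a <= x)%N /\ R = Q x.
Proof.
move=> aS [orR acR] QR RB; have locR := acyclic_local orR acR.
have /SmuP[/andP[ma aj] _] := aS.
have aK0 : a \in val K0 by apply: K0_mem; rewrite ma (ltnW aj).
set x := R K0.
have ax : (a <= x)%N by have := Ple_le QR K0; rewrite lower_in ?Amu_K0.
have xj : (x <= j)%N by have := Ple_le RB K0; rewrite Amu_K0.
pose lowered H := [&& a \in val H, j \in val H & B H == j].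
have R_out H : ~~ lowered H -> R H = B H.
  move=> notH; apply: ord_inj; apply/eqP; rewrite eqn_leq Ple_le //.
  by have := Ple_le QR H; rewrite lower_out.
have R_in H : lowered H -> R H = x.
  case/and3P=> aH jH /eqP BHj.
  have := Ple_le QR H; have := Ple_le RB H; rewrite lower_in // BHj => RHj aRH.
  apply: local_eq => //; first by apply: K0_mem; rewrite RHj (leq_trans ma aRH).
  by apply: edge_mem aH jH _; rewrite ax xj.
have [xjE|xnej] := eqVneq x j.
  left; apply/ffunP=> H; have [lH|/R_out //] := boolP (lowered H).
  by rewrite R_in // xjE; case/and3P: lH => _ _ /eqP ->.
have xlt : (x < j)%N by rewrite ltn_neqAle xj andbT; apply: contra xnej => /eqP/val_inj ->.
right; exists x; last split=> //.
  apply/SmuP; split=> [|L Lseg xL]; first by rewrite (leq_trans ma ax) xlt.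
  have jL : j \notin val L by apply/negP=> /(subsetP Lseg)/segmentP; rewrite ltnn andbF.
  have <- : R L = x by apply: locR; rewrite ?segment_sub_K0.
  have notL : ~~ lowered L by rewrite /lowered (negbTE jL) andbF.
  by rewrite R_out // Amu_emin // (negbTE jL).
apply/ffunP=> H; rewrite lowerE; have [lH|notH] := boolP (lowered H).
  rewrite R_in //; case/and3P: lH => aH jH ->; rewrite jH andbT.
  by rewrite (edge_mem aH jH) ?ax.
rewrite R_out //; case: and3P => // [[xH jH /eqP BHj]].
have RHj : R H = j by rewrite R_out.
by move: xnej; rewrite /x -(local_eq (H := H)) ?RHj ?eqxx.
Qed.

Lemma lower_Amu_flip_lt a a' : a \in S -> a' \in S -> (a < a')%N ->
  (forall H, a' \in val H -> j \in val H -> a \in val H) -> increasing_flip (Q a) (Q a').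
Proof.
move=> aS a'S aa' a'_a; have /SmuP[/andP[ma aj] _] := aS; have /SmuP[/andP[_ a'j] _] := a'S.
have same H : [&& a \in val H, j \in val H & B H == j] = [&& a' \in val H, j \in val H & B H == j].
  apply/and3P/and3P=> [[aH jH BH]|[a'H jH BH]]; split=> //; last exact: a'_a.
  by apply: edge_mem aH jH _; rewrite (ltnW aa') (ltnW a'j).
have aK0 : a \in val K0 by apply: K0_mem; rewrite ma (ltnW aj).
have a'K0 : a' \in val K0 by apply: K0_mem; rewrite (leq_trans ma (ltnW aa')) (ltnW a'j).
split.
  move/ffunP/(_ K0); rewrite !lower_in ?Amu_K0 // => aa'E.
  by rewrite aa'E ltnn in aa'.
exists a, a'; split=> // H; rewrite !lowerE -same; case: ifP => _.
  by split=> _; split.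
split=> [|/andP[aH a'H]]; first by rewrite eqxx.
split=> BH; exfalso.
  by have a'a := Amu_eq_Smu aS a'S BH a'H; rewrite a'a ltnn in aa'.
by have aa'E := Amu_eq_Smu a'S aS BH aH; rewrite aa'E ltnn in aa'.
Qed.

Lemma Amu_covers_max i : i \in S -> (forall x, x \in S -> x <= i)%N -> covers B (Q i).
Proof.
move=> iS imax; have [acQ flipQ] := lower_Amu_flip iS.
split; first exact: Amu_acyclic.
split=> //; split; first exact: Plt_flip acQ (Amu_acyclic m j) flipQ.
case=> R [acR [[QR neqQR] [RB neqRB]]].
have [//|[x xS [ix RE]]] := Amu_between iS acR QR RB.
by apply: neqQR; rewrite RE; congr lower; apply: ord_inj; apply/eqP; rewrite eqn_leq ix imax.
Qed.

Lemma Amu_cover_eq i C : i \in S -> (forall x, x \in S -> x <= i)%N ->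
  (forall H, i \in val H -> j \in val H -> val K0 \subset val H) -> covers B C -> C = Q i.
Proof.
move=> iS imax K0min coverC; have [acC [_ flipC]] := covers_flip coverC.
have [a aS CE] := Amu_flipE acC flipC; rewrite CE.
have [ai|ia] := ltnP a i; last first.
  by congr lower; apply: ord_inj; apply/eqP; rewrite eqn_leq imax.
have /SmuP[/andP[ma aj] _] := aS.
have aK0 : a \in val K0 by apply: K0_mem; rewrite ma (ltnW aj).
have [[acQa flipQa] [acQi flipQi]] := (lower_Amu_flip aS, lower_Amu_flip iS).
case: coverC => _ [_ [_ []]]; exists (Q i); split=> //; split.
  rewrite CE; apply: Plt_flip acQa acQi _; apply: lower_Amu_flip_lt => // H iH jH.
  exact: subsetP (K0min H iH jH) _ aK0.
exact: Plt_flip acQi (Amu_acyclic m j) flipQi.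
Qed.
Lemma Amu_not_minimum : ~ is_minimum B.
Proof.
move=> [_ /(_ _ (Amu_acyclic n j))/Ple_le/(_ K0)].
have nK0 : (n <= emin K0)%N = false by rewrite leqNgt emin_ltn.
by rewrite Amu_K0 Amu_val nK0 andbF eminK0 leqNgt mj.
Qed.

Lemma Amu_join_irreducible_mu i : i \in S -> (forall x, x \in S -> x <= i)%N ->
  join_irreducible B -> mu I i j = m.
Proof.
move=> iS imax [acB [_ [O' [coverO' O'uniq]]]].
have cover_above a : a \in S -> exists2 C, covers B C & Ple (Q a) C.
  move=> aS; have [acQ flipQ] := lower_Amu_flip aS.
  by have [C [coverC QC]] := Plt_covers acQ (Plt_flip acQ acB flipQ); exists C.
have O'E : O' = Q i.
  have [C coverC QiC] := cover_above i iS; rewrite (O'uniq _ coverC).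
  have [_ [acC [[CB neqCB] _]]] := coverC.
  have [//|[x xS [ix ->]]] := Amu_between iS acC QiC CB.
  by congr lower; apply: ord_inj; apply/eqP; rewrite eqn_leq ix imax.
have [xm xmS xm_m] := Smu_K0_emin.
have QmQi : Ple (Q xm) (Q i).
  by have [C coverC QC] := cover_above xm xmS; rewrite -O'E (O'uniq _ coverC).
have /SmuP[/andP[mi ij] _] := iS.
have iK0 : i \in val K0 by apply: K0_mem; rewrite mi (ltnW ij).
have [E [EJ iE jE Emin]] := Jij_edge iK0 jK0.
have EK0 : val E \subset val K0 := Emin K0 iK0 jK0.
have BE : B E = j by rewrite Amu_j // -eminK0 emin_sub.
have xmE : xm \in val E.
  apply: contraTT ij => xmNE; have := Ple_le QmQi E.
  rewrite (lower_out (a := xm)) ?(negbTE xmNE) // (lower_in (a := i)) // BE.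
  by rewrite -leqNgt.
rewrite /mu -EJ -/(emin E); apply/eqP; rewrite eqn_leq -{1}xm_m emin_le //.
by rewrite -eminK0 emin_sub.
Qed.

End AboveK0.

End Amu.

Lemma IJ_Jij_edge i j : (i, j) \in IJ I -> exists2 E : edge,
  [/\ i \in val E, j \in val E, emin E = mu I i j & (mu I i j < j)%N] &
  [/\ forall H, i \in val H -> j \in val H -> val E \subset val H,
      i \in Smu (mu I i j) j & forall x, x \in Smu (mu I i j) j -> (x <= i)%N].
Proof.
rewrite mem_IJ => /and3P[ij /exists_inP[H0 H0I /andP[iH0 jH0]] imaxE].
have [E [EJ iE jE Emin]] := Jij_edge (H0 := exist _ H0 H0I) iH0 jH0.
have eminE : emin E = mu I i j by rewrite /emin EJ.
have mj : (mu I i j < j)%N by rewrite -eminE (leq_ltn_trans (emin_le iE)).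
have [xm xmS _] := Smu_K0_emin eminE mj.
have /max_ordP[|iS imax] := imaxE; first by apply/set0Pn; exists xm.
by exists E.
Qed.

Lemma A_join_irreducible i j : (i, j) \in IJ I -> join_irreducible (A I i j).
Proof.
move=> /IJ_Jij_edge[E [_ jE eminE mj] [Emin iS imax]].
rewrite AE; split; first exact: Amu_acyclic.
split; first exact: Amu_not_minimum jE eminE mj.
exists (lower (Amu (mu I i j) j) i j); split; first exact: (Amu_covers_max jE eminE iS imax).
by move=> C /(Amu_cover_eq jE eminE iS imax Emin) ->.
Qed.

Lemma Amu_eq_le m1 m2 j1 j2 K : j1 \in val K -> emin K = m1 -> (m1 < j1)%N ->
  Amu m1 j1 = Amu m2 j2 -> j1 = j2 /\ (m2 <= m1)%N.
Proof.
move=> j1K Km1 m1j1 e; have : Amu m2 j2 K = j1 by rewrite -e Amu_j ?Km1.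
move=> A2K; move: (Amu_val m2 j2 K); rewrite A2K.
case: ifP => [/andP[_ m2K] /val_inj j1j2|_ j1E]; first by rewrite -Km1.
by rewrite j1E Km1 ltnn in m1j1.
Qed.

Lemma A_injective : {in IJ I &, injective (fun p => A I p.1 p.2)}.
Proof.
move=> [i j] [i' j'] /IJ_Jij_edge[E [_ jE eminE mj] [_ iS imax]].
move=> /IJ_Jij_edge[E' [_ jE' eminE' mj'] [_ iS' imax']] /=; rewrite !AE => eqA.
have [jj' le] := Amu_eq_le jE eminE mj eqA.
have [_ le'] := Amu_eq_le jE' eminE' mj' (esym eqA).
have mm' : mu I i j = mu I i' j' by apply/eqP; rewrite eqn_leq le le'.
rewrite -mm' -jj' in iS' imax'.
by rewrite jj' (_ : i = i') //; apply: ord_inj; apply/eqP; rewrite eqn_leq imax' ?imax.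
Qed.

Lemma join_irreducible_nonmin O : join_irreducible O -> exists H, (emin H < O H)%N.
Proof.
case=> _ [_ [O' [[_ [[orO' _] [[O'O neq] _]]] _]]].
have [H O'H] := omap_neq neq; exists H.
apply: leq_ltn_trans (emin_le (orO' H)) _; rewrite ltn_neqAle (Ple_le O'O) andbT.
by apply: contra O'H => /eqP/val_inj ->.
Qed.

Lemma join_irreducible_nonmin_eq O H1 H2 : join_irreducible O ->
  (emin H1 < O H1)%N -> (emin H2 < O H2)%N -> O H1 = O H2.
Proof.
move=> [acO [_ [O' [coverO' O'uniq]]]] lt1 lt2.
have [_ [_ [[O'O neqO'] _]]] := coverO'.
have [Hs O'Hs] := omap_neq neqO'.
suff below H : (emin H < O H)%N -> O Hs = O H by rewrite -(below H1) // (below H2).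
move=> lt; have [a [acQ flipQ]] := exists_lower_flip acO lt.
have [C [coverC QC]] := Plt_covers acQ (Plt_flip acQ acO flipQ).
rewrite -(O'uniq _ coverC) in QC.
apply: (lower_neq (a := a)); apply: contra O'Hs => /eqP QO.
have := Ple_le QC Hs; have := Ple_le O'O Hs; rewrite QO => le1 le2.
by apply/eqP/ord_inj/eqP; rewrite eqn_leq le1 le2.
Qed.

Lemma single_value_Amu O K0 : acyclic_orientation O ->
  (forall H, (emin H < O H)%N -> O H = O K0) ->
  (forall H, O H = O K0 -> (emin K0 <= emin H)%N) ->
  O = Amu (emin K0) (O K0).
Proof.
move=> [orO acO] single K0min; have locO := acyclic_local orO acO.
apply/ffunP=> H; apply: ord_inj; rewrite Amu_val.
have [lt|le] := ltnP (emin H) (O H).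
  have OH := single H lt; have jH : O K0 \in val H by rewrite -OH orO.
  by rewrite jH K0min // OH.
have OHE : (O H : nat) = emin H by apply/eqP; rewrite eqn_leq le emin_le ?orO.
case: ifP => [/andP[jH mH]|_ //].
have [x xK0 xE] := emin_mem K0.
rewrite (local_eq orO locO (K := K0)) //; apply: edge_mem xK0 (orO K0) _.
by rewrite xE OHE mH (emin_le jH).
Qed.

Lemma join_irreducible_Amu O : join_irreducible O ->
  exists j, exists K0 : edge, [/\ O K0 = j, (emin K0 < j)%N & O = Amu (emin K0) j].
Proof.
move=> JI; have [acO _] := JI; have [H1 lt1] := join_irreducible_nonmin JI.
have [K0 /eqP OK0 K0min] := @arg_minnP _ H1 (fun H => O H == O H1) emin (eqxx _).
exists (O H1), K0; split=> //; first by rewrite (leq_ltn_trans (K0min H1 _)).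
rewrite -OK0; apply: single_value_Amu => // H.
  by rewrite OK0 => lt; apply: join_irreducible_nonmin_eq.
by rewrite OK0 => /eqP; apply: K0min.
Qed.

Lemma join_irreducible_A O : join_irreducible O -> exists2 p, p \in IJ I & O = A I p.1 p.2.
Proof.
move=> JI; have [j [K0 [OK0 mj OE]]] := join_irreducible_Amu JI.
have jK0 : j \in val K0 by rewrite -OK0; case: JI => -[orO _] _.
have [xm xmS _] := Smu_K0_emin erefl mj.
have [i iS imax] := @arg_maxnP _ xm (mem (Smu (emin K0) j)) (fun x : 'I_n => x : nat) xmS.
rewrite OE in JI; have muE := Amu_join_irreducible_mu jK0 erefl mj iS imax JI.
have /SmuP[/andP[mi ij] _] := iS.
exists (i, j); last by rewrite OE AE muE.
rewrite mem_IJ ij muE /=; apply/andP; split.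
  apply/exists_inP; exists (val K0); rewrite ?(valP K0) // jK0 andbT.
  by apply: (K0_mem jK0 erefl); rewrite mi (ltnW ij).
by apply/max_ordP; [apply/set0Pn; exists i | split].
Qed.

End IntervalHypergraph.

Theorem proposition6p21 (n : nat) (I : {set {set 'I_n}}) :
  interval_hypergraph I -> closed_under_intersection I ->
  [/\ (forall p, p \in IJ I -> join_irreducible (A I p.1 p.2)),
      {in IJ I &, injective (fun p => A I p.1 p.2)} &
      (forall O : omapI I, join_irreducible O ->
         exists2 p, p \in IJ I & O = A I p.1 p.2)].
Proof.
move=> hI hC; split.
- by move=> [i j]; apply: A_join_irreducible.
- exact: A_injective.
- exact: join_irreducible_A.
Qed.
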